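(* Let $\mu\in\mathbb{R}\setminus\{0\}$ and let $X$ have the skew-symmetric-Laplace-uniform density $g$ with parameter $\mu$ (defined in the context), and write $\mu'_k=E(X^k)$. If $\mu>0$, then $$\mu'_1=\frac{2}{\mu}-\left(1+\frac{2}{\mu}\right)e^{-\mu},\quad \mu'_2=2,\quad \mu'_3=\frac{24}{\mu}-e^{-\mu}\left[\mu^2+6\mu+18+\frac{24}{\mu}\right],\quad \mu'_4=24.$$ If $\mu<0$, the same formulas hold after replacing $\mu$ by $-\mu$ in each expression and additionally multiplying the expressions for the odd-order moments $\mu'_1,\mu'_3$ by $-1$. Furthermore, for every $\mu\neq 0$ and every integer $r\ge 1$, $\mu'_{2r}=(2r)!$.
   Context: For $\mu\in\mathbb{R}\setminus\{0\}$, the skew-symmetric-Laplace-uniform distribution $SSLUD(\mu)$ is the distribution on $\mathbb{R}$ with density $$g(x)=\begin{cases} 0 & \text{if } x/\mu<-1,\\ e^{-|x|}\left(\dfrac{x}{2\mu}+\dfrac12\right) & \text{if } -1\le x/\mu<1,\\ e^{-|x|} & \text{if } x/\mu\ge 1.\end{cases}$$ *)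

From HB Require Import structures.
From mathcomp Require Import all_boot all_order all_algebra.
From mathcomp Require Import all_classical all_reals all_analysis.
Set Implicit Arguments. Unset Strict Implicit. Unset Printing Implicit Defensive.
Import Order.TTheory GRing.Theory Num.Theory.
Local Open Scope ring_scope.

Definition sslud_density (R : realType) (mu x : R) : R :=
  if x / mu < -1 then 0
  else if x / mu < 1 then expR (- `|x|) * (x / (2 * mu) + 1 / 2)
  else expR (- `|x|).

Definition sslud_moment (R : realType) (mu : R) (k : nat) : \bar R :=
  (\int[@lebesgue_measure R]_x ((x ^+ k * sslud_density mu x)%:E))%E.

From HB Require Import structures.
From mathcomp Require Import all_boot all_order all_algebra.
From mathcomp Require Import all_classical all_reals all_analysis.
From mathcomp Require Import ring lra measurable_realfun.
Import Order.TTheory GRing.Theory Num.Theory.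
Import numFieldNormedType.Exports.
Local Open Scope ring_scope.
Local Open Scope classical_set_scope.

(* Split the real line at -|mu|, 0 and |mu|.  On [-|mu|, |mu|] the density is
   e^{-|x|} (x/(2 mu) + 1/2); reflecting the negative half onto [0, |mu|] turns
   both middle pieces into combinations of the lower incomplete gamma values
   gamma(j+1, |mu|) = int_0^|mu| x^j e^{-x} dx, with the reflected piece carrying
   the sign (-1)^k.  Exactly one tail carries mass, the right one if mu > 0 and
   the left one if mu < 0, and it equals (+-1) Gamma(k+1, |mu|).  For even k the
   pieces add up to gamma(k+1, |mu|) + Gamma(k+1, |mu|) = k!; for odd k only
   the x/(2 mu) part survives, giving
   gamma(k+2, |mu|)/mu + sg(mu) Gamma(k+1, |mu|). *)

Section real_calculus.
Context {R : realType}.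

Lemma is_derive_continuous (f : R -> R) (x df : R) :
  is_derive x 1 f df -> {for x, continuous f}.
Proof.
move=> fx; have : derivable f x 1 by exact: ex_derive.
by move/derivable1_diffP/differentiable_continuous.
Qed.

Lemma continuous_FTC2_is_derive (f F : R -> R) (a b : R) :
  a < b -> continuous f -> (forall x : R, is_derive x 1 F (f x)) ->
  (\int[lebesgue_measure]_(x in `[a, b]) (f x)%:E)%E = (F b - F a)%:E.
Proof.
move=> ab cf dF; rewrite EFinB; apply: continuous_FTC2 => //.
- exact: continuous_subspaceT.
- split.
  + by move=> x _; case: (dF x).
  + apply: cvg_at_right_filter; exact: is_derive_continuous (dF a).
  + apply: cvg_at_left_filter; exact: is_derive_continuous (dF b).
- by move=> x _; rewrite derive1E; case: (dF x).
Qed.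

Local Open Scope ereal_scope.

Lemma integral_itv_split (f : R -> \bar R) (a b : itv_bound R) (x : R) :
  (a <= BRight x)%O -> (BRight x <= b)%O ->
  measurable_fun [set` Interval a b] f ->
  \int[lebesgue_measure]_(y in [set` Interval a b]) f y =
  \int[lebesgue_measure]_(y in [set` Interval a (BRight x)]) f y +
  \int[lebesgue_measure]_(y in [set` Interval (BRight x) b]) f y.
Proof.
move=> ax xb mf; rewrite (itv_bndbnd_setU ax xb) integral_setU //.
- by rewrite -itv_bndbnd_setU.
- apply/disj_setPS => y [/=]; rewrite !itv_boundlr /= !bnd_simp.
  by move=> /andP[_ yx] /andP[/(le_lt_trans yx)]; rewrite ltxx.
Qed.

Lemma integral_setT_split4 (f : R -> \bar R) (a b c : R) :
  (a <= b)%R -> (b <= c)%R -> measurable_fun setT f ->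
  \int[lebesgue_measure]_x f x =
  \int[lebesgue_measure]_(x in `]-oo, a]) f x +
  \int[lebesgue_measure]_(x in `[a, b]) f x +
  \int[lebesgue_measure]_(x in `[b, c]) f x +
  \int[lebesgue_measure]_(x in `[c, +oo[) f x.
Proof.
move=> ab bc mf; have mfS D : measurable_fun D f by exact: measurable_funS mf.
rewrite -set_itvNyy (integral_itv_split f -oo%O +oo%O a) //.
rewrite (integral_itv_split f (BRight a) +oo%O b) ?bnd_simp //.
rewrite (integral_itv_split f (BRight b) +oo%O c) ?bnd_simp //.
by rewrite !integral_itv_obnd_cbnd // !addeA.
Qed.

End real_calculus.

Section incomplete_gamma.
Context {R : realType}.
Implicit Types (k : nat) (a c p q x : R).

(* [upper_gamma k x] is Gamma(k+1, x) = int_x^oo t^k e^{-t} dt, whose recursion is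
   integration by parts, and [lower_gamma k x] is gamma(k+1, x) = int_0^x. *)
Fixpoint upper_gamma k x : R :=
  if k is k'.+1 then x ^+ k * expR (- x) + k%:R * upper_gamma k' x
  else expR (- x).

Definition lower_gamma k x : R := k`!%:R - upper_gamma k x.

Lemma upper_gamma0 k : upper_gamma k 0 = k`!%:R.
Proof.
elim: k => [|k IHk] /=; first by rewrite oppr0 expR0.
by rewrite IHk expr0n /= mul0r add0r factS natrM.
Qed.

Lemma is_derive_expRN x : is_derive x 1 (fun y => expR (- y)) (- expR (- x)).
Proof.
have := is_derive1_comp (is_derive_expR (- x)) (is_deriveN (is_derive_id x 1)).
by rewrite mulrN1.
Qed.

Lemma is_derive_upper_gamma k x :
  is_derive x 1 (upper_gamma k) (- (x ^+ k * expR (- x))).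
Proof.
elim: k => [|k IHk]; first by rewrite expr0 mul1r; exact: is_derive_expRN.
have -> : upper_gamma k.+1 =
    (@id R ^+ k.+1) * (fun y => expR (- y)) + k.+1%:R *: upper_gamma k.
  by apply/funext => y; rewrite !fctE.
have := is_deriveD (is_deriveM (is_deriveX k.+1 (is_derive_id x 1))
  (is_derive_expRN x)) (is_deriveZ k.+1%:R IHk).
by move/is_derive_eq; apply; rewrite /GRing.scale /= !fctE exprS; ring.
Qed.

Lemma continuous_expRN : continuous (fun x : R => expR (- x)).
Proof.
by move=> x; apply: continuous_comp; [exact: opp_continuous|exact: continuous_expR].
Qed.

Lemma continuous_powexpN k : continuous (fun x : R => x ^+ k * expR (- x)).
Proof.
by move=> x; apply: cvgM; [exact: exprn_continuous|exact: continuous_expRN].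
Qed.

Lemma powexpN_le k x : 0 < x -> x ^+ k * expR (- x) <= k.+1`!%:R / x.
Proof.
move=> x0; have ex0 := expR_gt0 x.
have : x ^+ k.+1 <= k.+1`!%:R * expR x.
  rewrite -ler_pdivrMl ?ltr0n ?fact_gt0 // mulrC.
  by apply: le_trans (expR_ge1Dxn k (ltW x0)); rewrite lerDr.
by rewrite expRN ler_pdivlMr // exprS mulrAC ler_pdivrMr // mulrC.
Qed.

Lemma cvg_powexpN k : x ^+ k * expR (- x) @[x --> +oo] --> (0 : R).
Proof.
apply: (@squeeze_cvgr _ _ _ _ (fun=> 0) (fun x : R => k.+1`!%:R / x)).
- near=> x; have x0 : 0 < x by near: x; exact: (nbhs_pinfty_gt (num_real _)).
  rewrite powexpN_le // andbT mulr_ge0 ?expR_ge0 // exprn_ge0 // ltW.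
- exact: cvg_cst.
- rewrite -(mulr0 (k.+1`!%:R : R)); apply: cvgMl_tmp.
  apply/gtr0_cvgV0.
    by near=> x; near: x; exact: (nbhs_pinfty_gt (num_real _)).
  by apply/cvgryPge => A; exact: (nbhs_pinfty_ge (num_real _)).
Unshelve. all: end_near.
Qed.

Lemma cvg_upper_gamma k : upper_gamma k x @[x --> +oo] --> (0 : R).
Proof.
elim: k => [|k IHk]; first exact: cvgr_expR.
rewrite -[0]addr0 -[X in _ + X](mulr0 k.+1%:R).
by apply: cvgD; [exact: cvg_powexpN|exact: cvgMl_tmp].
Qed.

Lemma integral_powexpN_itvy k a : 0 <= a ->
  (\int[lebesgue_measure]_(x in `[a, +oo[) (x ^+ k * expR (- x))%:E)%E =
  (upper_gamma k a)%:E.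
Proof.
move=> a0; rewrite (@ge0_continuous_FTC2y _ _ (- upper_gamma k) _ 0).
- by rewrite sub0e fctE EFinN oppeK.
- by move=> x ax; rewrite mulr_ge0 ?expR_ge0 ?exprn_ge0 //; exact: le_trans ax.
- exact/continuous_subspaceT/continuous_powexpN.
- by rewrite -oppr0; apply: cvgN; exact: cvg_upper_gamma.
- by move=> x _; exact/ex_derive/is_deriveN/is_derive_upper_gamma.
- apply/cvg_at_right_filter/is_derive_continuous.
  exact/is_deriveN/is_derive_upper_gamma.
- move=> x _; rewrite derive1E.
  by case: (is_deriveN (is_derive_upper_gamma k x)) => _ ->; rewrite opprK.
Qed.

Lemma integral_powexpN_affine k p q c : 0 < c ->
  (\int[lebesgue_measure]_(x in `[0%R, c])
     (x ^+ k * expR (- x) * (p * x + q))%:E)%E =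
  (p * lower_gamma k.+1 c + q * lower_gamma k c)%:E.
Proof.
move=> c0; pose F := - (p *: upper_gamma k.+1 + q *: upper_gamma k).
have dF x : is_derive x 1 F (x ^+ k * expR (- x) * (p * x + q)).
  have := is_deriveN (is_deriveD (is_deriveZ p (is_derive_upper_gamma k.+1 x))
    (is_deriveZ q (is_derive_upper_gamma k x))).
  by move/is_derive_eq; apply; rewrite /GRing.scale /= exprS; ring.
have cf : continuous (fun x => x ^+ k * expR (- x) * (p * x + q)).
  move=> x; apply: cvgM; first exact: continuous_powexpN.
  by apply: cvgD; [apply: cvgMl_tmp; exact: cvg_id|exact: cvg_cst].
rewrite (continuous_FTC2_is_derive _ _ _ _ c0 cf dF) /F /lower_gamma.
by rewrite !fctE !upper_gamma0 /GRing.scale /=; congr EFin; ring.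
Qed.

Lemma integral_powexp_itvNy k a : 0 <= a ->
  (\int[lebesgue_measure]_(x in `]-oo, (- a)%R]) (x ^+ k * expR x)%:E)%E =
  ((-1) ^+ k * upper_gamma k a)%:E.
Proof.
(* Substitution x -> -x on a half-line (ge0_integration_by_substitutionNy)
   needs a nonnegative integrand, hence the detour through G = (-x)^k e^x and
   the parity of k. *)
move=> a0; pose G x := (- x) ^+ k * expR x.
have G0 x : x <= - a -> 0 <= G x.
  by move=> xa; rewrite mulr_ge0 ?expR_ge0 // exprn_ge0 //; lra.
have intG : (\int[lebesgue_measure]_(x in `]-oo, (- a)%R]) (G x)%:E)%E =
    (upper_gamma k a)%:E.
  rewrite ge0_integration_by_substitutionNy.
  - rewrite -(integral_powexpN_itvy k _ a0); apply: eq_integral => x _.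
    by rewrite /G /= opprK.
  - apply: continuous_subspaceT => x; apply: cvgM; last exact: continuous_expR.
    apply: (@continuous_comp _ _ _ -%R (fun x => x ^+ k)).
      exact: opp_continuous.
    exact: exprn_continuous.
  - by move=> x; rewrite in_itv /= => /ltW /G0.
have -> : (fun x => (x ^+ k * expR x)%:E) = (fun x => ((-1) ^+ k * G x)%:E).
  by apply/funext => x; rewrite /G mulrA -exprMn mulN1r opprK.
rewrite -signr_odd; case: (odd k).
- under eq_integral do rewrite expr1 mulN1r EFinN.
  by rewrite integral_ge0N ?intG ?mulN1r // => x /G0.
- by under eq_integral do rewrite expr0 mul1r; rewrite intG mul1r.
Qed.

End incomplete_gamma.

Section sslud_density.
Context {R : realType}.
Implicit Types mu x : R.

Lemma sslud_densityE mu x : sslud_density mu x =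
  expR (- `|x|) * Num.min 1 (Num.max 0 ((x / mu + 1) / 2)).
Proof.
rewrite /sslud_density.
have -> : x / (2 * mu) = x / mu / 2 by rewrite [2 * mu]mulrC invfM mulrA.
set t := x / mu.
have [tN1|t_geN1] := ltP t (-1).
  by rewrite max_l ?min_r ?mulr0 //; lra.
have [t1|t_ge1] := ltP t 1.
  by rewrite max_r ?min_r 1?mulrDl //; lra.
by rewrite max_r ?min_l ?mulr1 //; lra.
Qed.

Lemma continuous_sslud_density mu : continuous (sslud_density mu).
Proof.
have -> : sslud_density mu = (fun x => expR (- `|x|)) *
    ((fun=> 1) \min ((fun=> 0) \max (fun x => (x / mu + 1) / 2))).
  by apply/funext => x; rewrite sslud_densityE.
move=> x; apply: cvgM.
  apply: continuous_comp; last exact: continuous_expR.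
  by apply: continuous_comp; [exact: norm_continuous|exact: opp_continuous].
apply: continuous_min; first exact: cst_continuous.
apply: continuous_max; first exact: cst_continuous.
apply: cvgMr_tmp; apply: cvgD; last exact: cvg_cst.
by apply: cvgMr_tmp; exact: cvg_id.
Qed.

Lemma sslud_density_mid mu x : mu != 0 -> `|x| <= `|mu| ->
  sslud_density mu x = expR (- `|x|) * (x / (2 * mu) + 1 / 2).
Proof.
move=> mu0 xmu.
have : -1 <= x / mu <= 1.
  by rewrite -ler_norml normf_div ler_pdivrMr ?normr_gt0 // mul1r.
rewrite sslud_densityE [2 * mu]mulrC invfM mulrA; set t := x / mu => /andP[? ?].
by rewrite max_r ?min_r; try lra; ring.
Qed.

Lemma sslud_density_le mu x : x / mu <= -1 -> sslud_density mu x = 0.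
Proof. by move=> ?; rewrite sslud_densityE max_l ?min_r ?mulr0 //; lra. Qed.

Lemma sslud_density_ge mu x : 1 <= x / mu -> sslud_density mu x = expR (- `|x|).
Proof. by move=> ?; rewrite sslud_densityE max_r ?min_l ?mulr1 //; lra. Qed.

End sslud_density.

Section sslud_moment.
Context {R : realType}.
Variables (mu : R) (k : nat).
Hypothesis mu_neq0 : mu != 0.
Local Notation g := (sslud_density mu).

Let normr_mu_gt0 : 0 < `|mu|. Proof. by rewrite normr_gt0. Qed.

Let continuous_integrand : continuous (fun x : R => x ^+ k * g x).
Proof.
move=> x; apply: cvgM; first exact: exprn_continuous.
exact: continuous_sslud_density.
Qed.

Lemma sslud_moment_split : sslud_moment mu k =
  (\int[lebesgue_measure]_(x in `]-oo, (- `|mu|)%R]) (x ^+ k * g x)%:E +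
  \int[lebesgue_measure]_(x in `[(- `|mu|)%R, 0%R]) (x ^+ k * g x)%:E +
  \int[lebesgue_measure]_(x in `[0%R, `|mu|%R]) (x ^+ k * g x)%:E +
  \int[lebesgue_measure]_(x in `[`|mu|%R, +oo[) (x ^+ k * g x)%:E)%E.
Proof.
apply: integral_setT_split4; [by rewrite oppr_le0|by []|].
by apply: measurableT_comp => //; exact: continuous_measurable_fun.
Qed.

Lemma integral_sslud_mid_right :
  (\int[lebesgue_measure]_(x in `[0%R, `|mu|%R]) (x ^+ k * g x)%:E)%E =
  ((2 * mu)^-1 * lower_gamma k.+1 `|mu| + 2^-1 * lower_gamma k `|mu|)%:E.
Proof.
rewrite -(integral_powexpN_affine k (2 * mu)^-1 2^-1 _ normr_mu_gt0).
apply: eq_integral => x; rewrite inE /= in_itv /= => /andP[x0 xmu].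
by rewrite sslud_density_mid ?(ger0_norm x0) //; congr EFin; ring.
Qed.

Lemma integral_sslud_mid_left :
  (\int[lebesgue_measure]_(x in `[(- `|mu|)%R, 0%R]) (x ^+ k * g x)%:E)%E =
  (- ((-1) ^+ k * (2 * mu)^-1) * lower_gamma k.+1 `|mu| +
   (-1) ^+ k * 2^-1 * lower_gamma k `|mu|)%:E.
Proof.
rewrite -[X in `[_, X]]oppr0 integration_by_substitution_oppr;
  [|exact: normr_ge0|exact: continuous_subspaceT].
rewrite -(integral_powexpN_affine k _ _ _ normr_mu_gt0).
apply: eq_integral => x; rewrite inE /= in_itv /= => /andP[x0 xmu].
rewrite sslud_density_mid ?normrN ?(ger0_norm x0) // (exprNn x).
by congr EFin; ring.
Qed.

Lemma integral_sslud_tail_left :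
  (\int[lebesgue_measure]_(x in `]-oo, (- `|mu|)%R]) (x ^+ k * g x)%:E)%E =
  (if 0 < mu then 0 else (-1) ^+ k * upper_gamma k `|mu|)%:E.
Proof.
have [mu_pos|mu_le0] := ltP 0 mu.
  rewrite integral0_eq // => x; rewrite /= in_itv /= (gtr0_norm mu_pos) => xmu.
  by rewrite sslud_density_le ?mulr0 // ler_pdivrMr // mulN1r.
have mu_neg : mu < 0 by rewrite lt_neqAle mu_neq0.
rewrite -integral_powexp_itvNy //; apply: eq_integral => x.
rewrite inE /= in_itv /= (ltr0_norm mu_neg) opprK => xmu.
by rewrite sslud_density_ge ?ler_ndivlMr ?mul1r // ler0_norm ?opprK //; lra.
Qed.

Lemma integral_sslud_tail_right :
  (\int[lebesgue_measure]_(x in `[`|mu|%R, +oo[) (x ^+ k * g x)%:E)%E =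
  (if 0 < mu then upper_gamma k `|mu| else 0)%:E.
Proof.
have [mu_pos|mu_le0] := ltP 0 mu.
  rewrite -integral_powexpN_itvy //; apply: eq_integral => x.
  rewrite inE /= in_itv /= andbT (gtr0_norm mu_pos) => xmu.
  by rewrite sslud_density_ge ?ler_pdivlMr ?mul1r // ger0_norm //; lra.
have mu_neg : mu < 0 by rewrite lt_neqAle mu_neq0.
rewrite integral0_eq // => x.
rewrite /= in_itv /= andbT (ltr0_norm mu_neg) => xmu.
by rewrite sslud_density_le ?mulr0 // ler_ndivrMr // mulN1r.
Qed.

Lemma sslud_moment_gamma : sslud_moment mu k =
  ((if 0 < mu then 1 else (-1) ^+ k) * upper_gamma k `|mu| +
   (1 - (-1) ^+ k) / (2 * mu) * lower_gamma k.+1 `|mu| +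
   (1 + (-1) ^+ k) / 2 * lower_gamma k `|mu|)%:E.
Proof.
rewrite sslud_moment_split integral_sslud_tail_left integral_sslud_mid_left.
rewrite integral_sslud_mid_right integral_sslud_tail_right -!EFinD.
by congr EFin; case: ifP => _; ring.
Qed.

Lemma sslud_moment_even : ~~ odd k -> sslud_moment mu k = (k`!%:R)%:E.
Proof.
move=> k_even; rewrite sslud_moment_gamma -signr_odd (negbTE k_even) expr0.
by rewrite /lower_gamma if_same; congr EFin; field.
Qed.

Lemma sslud_moment_odd : odd k -> sslud_moment mu k =
  (Num.sg mu * upper_gamma k `|mu| + lower_gamma k.+1 `|mu| / mu)%:E.
Proof.
move=> k_odd; rewrite sslud_moment_gamma -signr_odd k_odd expr1.
have [mu_neg|mu_pos|/eqP] := ltgtP mu 0; last by rewrite (negbTE mu_neq0).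
- by rewrite ltr0_sg //; congr EFin; field.
- by rewrite gtr0_sg //; congr EFin; field.
Qed.

End sslud_moment.

Local Close Scope classical_set_scope.

Theorem mainTheorem3 (R : realType) (mu : R) (hmu : mu != 0) :
  (0 < mu ->
     sslud_moment mu 1 = (2 / mu - (1 + 2 / mu) * expR (- mu))%:E /\
     sslud_moment mu 2 = 2%:E /\
     sslud_moment mu 3 =
       (24 / mu - expR (- mu) * (mu ^+ 2 + 6 * mu + 18 + 24 / mu))%:E /\
     sslud_moment mu 4 = 24%:E) /\
  (mu < 0 ->
     sslud_moment mu 1 = (- (2 / (- mu) - (1 + 2 / (- mu)) * expR (- (- mu))))%:E /\
     sslud_moment mu 2 = 2%:E /\
     sslud_moment mu 3 =
       (- (24 / (- mu) - expR (- (- mu)) *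
            ((- mu) ^+ 2 + 6 * (- mu) + 18 + 24 / (- mu))))%:E /\
     sslud_moment mu 4 = 24%:E) /\
  (forall r : nat, (1 <= r)%N -> sslud_moment mu (2 * r) = ((2 * r)`!)%:R%:E).
Proof.
have odd_moments sgn : Num.sg mu = sgn ->
    sslud_moment mu 1 =
      (sgn * upper_gamma 1 `|mu| + lower_gamma 2 `|mu| / mu)%:E /\
    sslud_moment mu 3 =
      (sgn * upper_gamma 3 `|mu| + lower_gamma 4 `|mu| / mu)%:E.
  by move=> <-; split; exact: sslud_moment_odd.
split; [|split]; last by move=> r _; rewrite sslud_moment_even // oddM.
- move=> mu_pos; have [-> ->] := odd_moments 1 (gtr0_sg mu_pos).
  rewrite !sslud_moment_even // (gtr0_norm mu_pos) /lower_gamma /= !factS fact0.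
  by split; [|split; [|split]]; congr EFin; field.
- move=> mu_neg; have [-> ->] := odd_moments (-1) (ltr0_sg mu_neg).
  rewrite !sslud_moment_even // (ltr0_norm mu_neg) /lower_gamma /= !factS fact0.
  by split; [|split; [|split]]; congr EFin; field.
Qed.
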